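(* In the setup described in the context, assume the Levi-Civita connection of $\tilde g$ is locally flat ($\tilde R=0$). Let $x\in T_pM$ induce a $Q$-basis, and let $\psi=\angle(x,Q^2x)$ be the $g$-angle. Then $$r(x)=r(Qx)=r(Q^2x)=r(Q^3x)=\frac{\cos\psi}{8}(3\tau^*+\tau)+\frac18(3\tau+\tau^* ).$$
   Context: Let $M$ be a 3-dimensional smooth manifold. Fix a coordinate chart $(x^1,x^2,x^3)$ with coordinate vector fields $\partial_i$. Structures: - $g$ is a Riemannian metric with $g(\partial_1,\partial_1)=g(\partial_2,\partial_2)=A$, $g(\partial_3,\partial_3)=B$ and $g(\partial_i,\partial_j)=0$ for $i\ne j$. Here $A,B$ are smooth positive functions. - $Q$ is the $(1,1)$-tensor field with $Q\partial_1=\partial_2$, $Q\partial_2=-\partial_1$, $Q\partial_3=\partial_3$. - $P=Q^2$ and $\tilde g(x,y)=g(x,Py)$. Curvature: - $\nabla$ and $\tilde\nabla$ are the Levi-Civita connections of $g$ and $\tilde g$, with curvatures $R$ and $\tilde R$. - $R(x,y)z=\nabla_x\nabla_yz-\nabla_y\nabla_xz-\nabla_{[x,y]}z$ and $R(x,y,z,t)=g(R(x,y)z,t)$. - $\rho(y,z)=g^{ij}R(e_i,y,z,e_j)$, $\tau=g^{ij}\rho_{ij}$ and $\tau^*=\tilde g^{ij}\rho_{ij}$. - $r(x)=\rho(x,x)/g(x,x)$. Angles and $Q$-bases: - The $g$-angle is defined by $\cos\angle(u,v)=g(u,v)/\sqrt{g(u,u)g(v,v)}$. - A vector $x$ induces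 a $Q$-basis if $\{x,Qx,Q^2x\}$ is a basis of $T_pM$. *)

From Stdlib Require Import Reals List.
From Coquelicot Require Import Coquelicot.
Open Scope R_scope.

Inductive idx := I1 | I2 | I3.

Definition sum3 (f : idx -> R) : R := f I1 + f I2 + f I3.
Definition nxt (i : idx) : idx := match i with I1 => I2 | I2 => I3 | I3 => I1 end.

Definition pt : Type := ((R * R) * R)%type.

Definition shift (p : pt) (i : idx) (t : R) : pt :=
  match i with
  | I1 => (fst (fst p) + t, snd (fst p), snd p)
  | I2 => (fst (fst p), snd (fst p) + t, snd p)
  | I3 => (fst (fst p), snd (fst p), snd p + t)
  end.

Definition pd (i : idx) (f : pt -> R) (p : pt) : R :=
  Derive (fun t => f (shift p i t)) 0.

Fixpoint ipd (l : list idx) (f : pt -> R) : pt -> R :=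
  match l with nil => f | i :: l' => pd i (ipd l' f) end.

Definition smooth_on (U : pt -> Prop) (f : pt -> R) : Prop :=
  forall (l : list idx) (p : pt), U p ->
    (forall i, ex_derive (fun t => ipd l f (shift p i t)) 0) /\
    continuous (ipd l f) p.

(** A (pseudo-)metric / symmetric 2-tensor field in coordinates: G i j p = G(d_i,d_j)(p). *)
Definition mfield : Type := idx -> idx -> pt -> R.

(** Inverse of a 3x3 matrix (adjugate / determinant). *)
Definition det3 (m : idx -> idx -> R) : R :=
  sum3 (fun j => m I1 j * (m I2 (nxt j) * m I3 (nxt (nxt j))
                           - m I2 (nxt (nxt j)) * m I3 (nxt j))).
Definition inv3 (m : idx -> idx -> R) (i j : idx) : R :=
  (m (nxt j) (nxt i) * m (nxt (nxt j)) (nxt (nxt i))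
   - m (nxt j) (nxt (nxt i)) * m (nxt (nxt j)) (nxt i)) / det3 m.

Definition ginv (G : mfield) (i j : idx) (p : pt) : R := inv3 (fun a b => G a b p) i j.

(** Christoffel symbols of the Levi-Civita connection of G:
    nabla_{d_i} d_j = sum_k Gamma G k i j d_k. *)
Definition Gamma (G : mfield) (k i j : idx) (p : pt) : R :=
  / 2 * sum3 (fun l => ginv G k l p *
     (pd i (G j l) p + pd j (G i l) p - pd l (G i j) p)).

(** Curvature: R(d_i,d_j) d_k = sum_l Riem G l i j k d_l,
    with R(x,y)z = nabla_x nabla_y z - nabla_y nabla_x z - nabla_[x,y] z. *)
Definition Riem (G : mfield) (l i j k : idx) (p : pt) : R :=
  pd i (Gamma G l j k) p - pd j (Gamma G l i k) p
  + sum3 (fun m => Gamma G m j k p * Gamma G l i m p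
                   - Gamma G m i k p * Gamma G l j m p).

Definition Riem4 (G : mfield) (i j k t : idx) (p : pt) : R :=
  sum3 (fun l => Riem G l i j k p * G l t p).

Definition Ricci (G : mfield) : mfield :=
  fun y z p => sum3 (fun i => sum3 (fun j => ginv G i j p * Riem4 G i y z j p)).

Definition gmetric (A B : pt -> R) : mfield :=
  fun i j p => match i, j with
               | I1, I1 => A p | I2, I2 => A p | I3, I3 => B p | _, _ => 0 end.

(** Components of Q: Q d_j = sum_k Qc k j d_k. *)
Definition Qc (k j : idx) : R :=
  match k, j with
  | I2, I1 => 1 | I1, I2 => -1 | I3, I3 => 1 | _, _ => 0 end.

Definition Pc (k j : idx) : R := sum3 (fun m => Qc k m * Qc m j).

Definition gtilde (A B : pt -> R) : mfield :=
  fun i j p => sum3 (fun k => gmetric A B i k p * Pc k j).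

Definition vec : Type := idx -> R.
Definition Qv (x : vec) : vec := fun k => sum3 (fun j => Qc k j * x j).

Definition vzero : vec := fun _ => 0.
Definition lincomb3 (a b c : R) (u v w : vec) : vec := fun k => a * u k + b * v k + c * w k.
Definition is_basis3 (u v w : vec) : Prop :=
  (forall a b c, lincomb3 a b c u v w = vzero -> a = 0 /\ b = 0 /\ c = 0) /\
  (forall y : vec, exists a b c, y = lincomb3 a b c u v w).

Definition induces_Qbasis (x : vec) : Prop := is_basis3 x (Qv x) (Qv (Qv x)).

Definition tval (G : mfield) (p : pt) (x y : vec) : R :=
  sum3 (fun i => sum3 (fun j => G i j p * x i * y j)).

Definition tau (A B : pt -> R) (p : pt) : R :=
  sum3 (fun i => sum3 (fun j => ginv (gmetric A B) i j p * Ricci (gmetric A B) i j p)).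
Definition tau_star (A B : pt -> R) (p : pt) : R :=
  sum3 (fun i => sum3 (fun j => ginv (gtilde A B) i j p * Ricci (gmetric A B) i j p)).

Definition rfun (A B : pt -> R) (p : pt) (x : vec) : R :=
  tval (Ricci (gmetric A B)) p x x / tval (gmetric A B) p x x.

Definition gangle (A B : pt -> R) (p : pt) (u v : vec) : R :=
  acos (tval (gmetric A B) p u v /
        sqrt (tval (gmetric A B) p u u * tval (gmetric A B) p v v)).

(* Since [P = Q^2 = diag(-1, -1, 1)], the metric [gtilde = diag(-A, -A, B)] differs from
   [g = diag(A, A, B)] only by signs, so its Christoffel symbols are those of [g] up to sign.
   Comparing the traces [R^i_{iyz}] of the two curvature tensors then shows that flatness of
   [gtilde] forces the Ricci tensor of [g] to be [diag(u, u, v)] in the coordinate frame.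
   Such a [rho] is [Q]-invariant like [g], whence [r(Qx) = r(x)]; and with
   [s = A (x1^2 + x2^2)], [t = B x3^2] one has [r(x) = (u s / A + v t / B) / (s + t)],
   [cos psi = (t - s) / (t + s)], [tau = 2u/A + v/B], [tau* = -2u/A + v/B], from which the
   formula is an identity. *)
From Stdlib Require Import Reals Lra FunctionalExtensionality.
From Coquelicot Require Import Coquelicot.
Open Scope R_scope.

Definition idx_eqb (i j : idx) : bool :=
  match i, j with I1, I1 | I2, I2 | I3, I3 => true | _, _ => false end.

Definition Pdiag (i : idx) : R := match i with I3 => 1 | _ => -1 end.

Lemma pd_ext_scal (i : idx) (c : R) (f h : pt -> R) (p : pt) :
  (forall q, f q = c * h q) -> pd i f p = c * pd i h p.
Proof. intro Hfh; unfold pd; rewrite <- Derive_scal; apply Derive_ext; intro; apply Hfh. Qed.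

Section Christoffel.
Variables A B : pt -> R.

Lemma gtilde_gmetric i j q : gtilde A B i j q = Pdiag j * gmetric A B i j q.
Proof. destruct i, j; unfold gtilde, gmetric, Pc, Qc, sum3; simpl; ring. Qed.

Lemma pd_gmetric i j k q : pd i (gmetric A B j k) q =
  gmetric (pd i A) (pd i B) j k q.
Proof. destruct j, k; try reflexivity; unfold pd, gmetric; apply Derive_const. Qed.

Lemma ginv_gtilde i j q : ginv (gtilde A B) i j q = Pdiag i * ginv (gmetric A B) i j q.
Proof.
  unfold ginv, inv3.
  replace (det3 (fun a b => gtilde A B a b q)) with (det3 (fun a b => gmetric A B a b q))
    by (unfold det3, gtilde, gmetric, Pc, Qc, sum3, nxt; simpl; ring).
  destruct i, j; unfold gtilde, gmetric, Pc, Qc, sum3, nxt; simpl; unfold Rdiv; ring.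
Qed.

(* For a diagonal metric [Gamma^l_jk] involves only [g^ll] and derivatives of [g_kl], [g_jl]
   and [g_jk]; the signs of [gtilde] cancel except in the term [d_l g_jk] with [j = k <> l]. *)
Definition chr_sign (l j k : idx) : R := if idx_eqb j k then Pdiag l * Pdiag j else 1.

Lemma Gamma_gtilde l j k q :
  Gamma (gtilde A B) l j k q = chr_sign l j k * Gamma (gmetric A B) l j k q.
Proof.
  unfold Gamma, sum3.
  rewrite !ginv_gtilde, !(pd_ext_scal _ _ _ _ _ (gtilde_gmetric _ _)), !pd_gmetric.
  destruct l, j, k; unfold ginv, inv3, gmetric, chr_sign, nxt; simpl; unfold Rdiv; ring.
Qed.

Lemma Riem_gtilde l i j k q : Riem (gtilde A B) l i j k q =
  chr_sign l j k * pd i (Gamma (gmetric A B) l j k) q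
  - chr_sign l i k * pd j (Gamma (gmetric A B) l i k) q
  + sum3 (fun m => chr_sign m j k * chr_sign l i m
                     * (Gamma (gmetric A B) m j k q * Gamma (gmetric A B) l i m q)
                   - chr_sign m i k * chr_sign l j m
                     * (Gamma (gmetric A B) m i k q * Gamma (gmetric A B) l j m q)).
Proof.
  unfold Riem, sum3.
  rewrite !(pd_ext_scal _ _ _ _ _ (Gamma_gtilde _ _ _)), !Gamma_gtilde; ring.
Qed.

Lemma ginv_gmetric i j q : A q <> 0 -> B q <> 0 ->
  ginv (gmetric A B) i j q = gmetric (fun q => / A q) (fun q => / B q) i j q.
Proof.
  intros HA HB; destruct i, j; unfold ginv, inv3, det3, gmetric, sum3, nxt; simpl;
    field; auto.
Qed.

Lemma Gamma_gmetric l j k q : A q <> 0 -> B q <> 0 ->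
  Gamma (gmetric A B) l j k q =
  / 2 * gmetric (fun q => / A q) (fun q => / B q) l l q *
  (pd j (gmetric A B k l) q + pd k (gmetric A B j l) q - pd l (gmetric A B j k) q).
Proof.
  intros HA HB; unfold Gamma, sum3; rewrite !ginv_gmetric by auto.
  destruct l; simpl; ring.
Qed.

(* Holds everywhere, invertibility of [g] not needed, so it can be differentiated. *)
Lemma Gamma_gmetric_3_22_11 q :
  Gamma (gmetric A B) I3 I2 I2 q = Gamma (gmetric A B) I3 I1 I1 q.
Proof.
  unfold Gamma, sum3; rewrite !pd_gmetric.
  unfold ginv, inv3, gmetric, nxt; simpl; unfold Rdiv; ring.
Qed.

Lemma pd_Gamma_gmetric_3_22_11 i q :
  pd i (Gamma (gmetric A B) I3 I2 I2) q = pd i (Gamma (gmetric A B) I3 I1 I1) q.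
Proof. unfold pd; apply Derive_ext; intro; apply Gamma_gmetric_3_22_11. Qed.

Definition ricci_trace (G : mfield) : mfield :=
  fun y z q => sum3 (fun i => Riem G i i y z q).

Lemma Ricci_gmetric_trace y z q : A q <> 0 -> B q <> 0 ->
  Ricci (gmetric A B) y z q = ricci_trace (gmetric A B) y z q.
Proof.
  intros HA HB; unfold Ricci, ricci_trace, Riem4, sum3.
  rewrite !ginv_gmetric by auto; unfold gmetric; simpl; field; auto.
Qed.

Lemma ricci_trace_gtilde_offdiag y z q : A q <> 0 -> B q <> 0 -> y <> z ->
  ricci_trace (gmetric A B) y z q = ricci_trace (gtilde A B) y z q.
Proof.
  intros HA HB Hyz; unfold ricci_trace, sum3; rewrite !Riem_gtilde; unfold Riem, sum3.
  destruct y, z; try congruence;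
    rewrite !Gamma_gmetric by auto; rewrite !pd_gmetric;
    cbv beta iota delta [chr_sign idx_eqb Pdiag gmetric]; field; auto.
Qed.

Lemma ricci_trace_gtilde_11_22 q : A q <> 0 -> B q <> 0 ->
  ricci_trace (gmetric A B) I1 I1 q - ricci_trace (gmetric A B) I2 I2 q =
  ricci_trace (gtilde A B) I1 I1 q - ricci_trace (gtilde A B) I2 I2 q.
Proof.
  intros HA HB; unfold ricci_trace, sum3; rewrite !Riem_gtilde; unfold Riem, sum3.
  rewrite !pd_Gamma_gmetric_3_22_11.
  rewrite !Gamma_gmetric by auto; rewrite !pd_gmetric;
    cbv beta iota delta [chr_sign idx_eqb Pdiag gmetric]; field; auto.
Qed.
End Christoffel.

Lemma ricci_trace_flat (G : mfield) y z q :
  (forall l i j k, Riem G l i j k q = 0) -> ricci_trace G y z q = 0.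
Proof. intro Hflat; unfold ricci_trace, sum3; rewrite !Hflat; ring. Qed.

Lemma tval_ext (G G' : mfield) p x y :
  (forall i j, G i j p = G' i j p) -> tval G p x y = tval G' p x y.
Proof. intro HG; unfold tval, sum3; rewrite !HG; reflexivity. Qed.

Lemma Qv_I1 x : Qv x I1 = - x I2. Proof. unfold Qv, sum3, Qc; ring. Qed.
Lemma Qv_I2 x : Qv x I2 = x I1. Proof. unfold Qv, sum3, Qc; ring. Qed.
Lemma Qv_I3 x : Qv x I3 = x I3. Proof. unfold Qv, sum3, Qc; ring. Qed.

Lemma tval_gmetric A B p u v :
  tval (gmetric A B) p u v = A p * (u I1 * v I1 + u I2 * v I2) + B p * (u I3 * v I3).
Proof. unfold tval, sum3, gmetric; ring. Qed.

Lemma tval_gmetric_Qv A B p u v :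
  tval (gmetric A B) p (Qv u) (Qv v) = tval (gmetric A B) p u v.
Proof. rewrite !tval_gmetric, !Qv_I1, !Qv_I2, !Qv_I3; ring. Qed.

Lemma Qbasis_neq0 x : induces_Qbasis x -> x <> vzero.
Proof.
  intros [Hfree _] ->; destruct (Hfree 1 0 0) as [H10 _]; [|lra].
  apply functional_extensionality; intro; unfold lincomb3, vzero; ring.
Qed.

Lemma tval_gmetric_pos A B p x : 0 < A p -> 0 < B p -> x <> vzero ->
  0 < tval (gmetric A B) p x x.
Proof.
  intros HA HB Hx; rewrite tval_gmetric.
  assert (Hsq : 0 < x I1 * x I1 + x I2 * x I2 + x I3 * x I3).
  { destruct (Rle_lt_or_eq_dec 0 (x I1 * x I1 + x I2 * x I2 + x I3 * x I3)) as [Hlt|Heq];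
      [nra|exact Hlt|].
    exfalso; apply Hx, functional_extensionality; intro i; destruct i; unfold vzero; nra. }
  destruct (Rle_lt_dec (x I3 * x I3) 0).
  - assert (0 < A p * (x I1 * x I1 + x I2 * x I2)) by (apply Rmult_lt_0_compat; nra). nra.
  - assert (0 < B p * (x I3 * x I3)) by (apply Rmult_lt_0_compat; nra). nra.
Qed.

Lemma cos_gangle_Q2 A B p x : 0 < A p -> 0 < B p -> x <> vzero ->
  cos (gangle A B p x (Qv (Qv x))) =
  tval (gmetric A B) p x (Qv (Qv x)) / tval (gmetric A B) p x x.
Proof.
  intros HA HB Hx; unfold gangle; rewrite !tval_gmetric_Qv.
  pose proof (tval_gmetric_pos A B p x HA HB Hx) as HN.
  assert (Hc : - tval (gmetric A B) p x x <= tval (gmetric A B) p x (Qv (Qv x))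
               <= tval (gmetric A B) p x x).
  { rewrite !tval_gmetric; repeat rewrite ?Qv_I1, ?Qv_I2, ?Qv_I3.
    assert (0 <= A p * (x I1 * x I1 + x I2 * x I2)) by (apply Rmult_le_pos; nra).
    assert (0 <= B p * (x I3 * x I3)) by (apply Rmult_le_pos; nra).
    replace (A p * (x I1 * - x I1 + x I2 * - x I2))
      with (- (A p * (x I1 * x I1 + x I2 * x I2))) by ring.
    lra. }
  rewrite sqrt_square by lra.
  rewrite cos_acos; [reflexivity|].
  split; [apply Rle_div_r | apply Rle_div_l]; lra.
Qed.

Lemma Ricci_gmetric_flat_gtilde A B p : 0 < A p -> 0 < B p ->
  (forall l i j k, Riem (gtilde A B) l i j k p = 0) ->
  forall i j, Ricci (gmetric A B) i j p =
  gmetric (fun _ => Ricci (gmetric A B) I1 I1 p) (fun _ => Ricci (gmetric A B) I3 I3 p) i j p.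
Proof.
  intros HA HB Hflat i j.
  assert (HA0 : A p <> 0) by lra; assert (HB0 : B p <> 0) by lra.
  destruct i, j; cbn [gmetric]; try reflexivity;
    rewrite ?Ricci_gmetric_trace by auto; try solve
    [ rewrite ricci_trace_gtilde_offdiag, ricci_trace_flat by (auto; discriminate); reflexivity ].
  pose proof (ricci_trace_gtilde_11_22 A B p HA0 HB0) as H12.
  rewrite !(ricci_trace_flat (gtilde A B)) in H12 by exact Hflat; lra.
Qed.

Section RicciDiagonal.
Variables (A B : pt -> R) (p : pt) (u v : R).
Hypothesis Hric :
  forall i j, Ricci (gmetric A B) i j p = gmetric (fun _ => u) (fun _ => v) i j p.

Lemma rfun_diag x :
  rfun A B p x = tval (gmetric (fun _ => u) (fun _ => v)) p x x / tval (gmetric A B) p x x.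
Proof. unfold rfun; rewrite (tval_ext _ _ p _ _ Hric); reflexivity. Qed.

Lemma rfun_Qv x : rfun A B p (Qv x) = rfun A B p x.
Proof. rewrite !rfun_diag, !tval_gmetric_Qv; reflexivity. Qed.

Lemma tau_diag : A p <> 0 -> B p <> 0 -> tau A B p = 2 * u / A p + v / B p.
Proof.
  intros HA HB; unfold tau, sum3; rewrite !Hric, !ginv_gmetric by auto.
  cbn [gmetric]; field; auto.
Qed.

Lemma tau_star_diag : A p <> 0 -> B p <> 0 -> tau_star A B p = - 2 * u / A p + v / B p.
Proof.
  intros HA HB; unfold tau_star, sum3; rewrite !Hric, !ginv_gtilde, !ginv_gmetric by auto.
  cbn [gmetric Pdiag]; field; auto.
Qed.
End RicciDiagonal.

Theorem proposition5p6 (U : pt -> Prop) (A B : pt -> R) :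
  open U ->
  smooth_on U A -> smooth_on U B ->
  (forall q, U q -> 0 < A q) -> (forall q, U q -> 0 < B q) ->
  (forall q, U q -> forall l i j k, Riem (gtilde A B) l i j k q = 0) ->
  forall (p : pt) (x : vec), U p -> induces_Qbasis x ->
  let psi := gangle A B p x (Qv (Qv x)) in
  rfun A B p x = rfun A B p (Qv x) /\
  rfun A B p (Qv x) = rfun A B p (Qv (Qv x)) /\
  rfun A B p (Qv (Qv x)) = rfun A B p (Qv (Qv (Qv x))) /\
  rfun A B p (Qv (Qv (Qv x))) =
    cos psi / 8 * (3 * tau_star A B p + tau A B p) + / 8 * (3 * tau A B p + tau_star A B p).
Proof.
  intros _ _ _ HA HB Hflat p x Hp Hx psi.
  specialize (HA p Hp); specialize (HB p Hp); specialize (Hflat p Hp).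
  pose proof (Ricci_gmetric_flat_gtilde A B p HA HB Hflat) as Hric.
  rewrite !(rfun_Qv _ _ _ _ _ Hric).
  split; [reflexivity|split; [reflexivity|split; [reflexivity|]]].
  apply Qbasis_neq0 in Hx; pose proof (tval_gmetric_pos A B p x HA HB Hx) as HN.
  unfold psi; rewrite cos_gangle_Q2, (tau_diag _ _ _ _ _ Hric), (tau_star_diag _ _ _ _ _ Hric),
    (rfun_diag _ _ _ _ _ Hric) by (auto; lra).
  rewrite !tval_gmetric in *; repeat rewrite ?Qv_I1, ?Qv_I2, ?Qv_I3.
  field; lra.
Qed.
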